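(* Fix an arbitrary execution of Algorithm $\mathrm{tree}(G)$ on $G$, and let $r$ be the rank defined in the context. Then every vertex $u$ of $G$ has at most one neighbor $v$ in $G$ with $r(u)<r(v)$.
   Context: $G$ is a finite connected simple undirected graph containing a vertex $a$ with $d_G(a)\ge 2$. For a subtree $T$ of $G$ and a vertex $u$ of $T$: - $V_T(u)$ is the set of vertices $v\in V(G)\setminus V(T)$ with $uv\in E(G)$. - $E_T(u)$ is the set of edges $uv$ of $G$ with $v\in V_T(u)$. - If $|V_T(u)|=1$, then $v_T(u)$ denotes the unique vertex of $V_T(u)$. Three sets of vertices of $T$ are defined: - $W_2(T)=\{u\in V(T): |V_T(u)|\ge 2\}$. - $W_1(T)=\{u\in V(T): |V_T(u)|=1,\ |V_{T\cup E_T(u)}(v_T(u))|\ge 2\}$. - $W_0(T)=\{u\in V(T): |V_T(u)|=1,\ |V_{T\cup E_T(u)}(v_T(u))|\le 1\}$. Algorithm $\mathrm{tree}(G)$ runs as follows. 1. Start with $T=\{a\}$. 2. While $V(T)\ne V(G)$: - If $W_2(T)\ne\emptyset$, pick an arbitrary $u\in W_2(T)$. - Else, if $W_1(T)\neq\emptyset$, pick an arbitrary $u\in W_1(T)$. - Else, let $u$ be the vertex of $W_0(T)$ that joined $V(T)$ most recently. - Set $T:=T\cup E_T(u)$ (''expand $T$ at $u$''). 3. Return $T$. Now fix an execution and let $T$ be the returned spanning tree, rooted at $a$. For $v\ne a$, let $p(v)$ be the parent of $v$ in $T$. For each vertex $u$ with $d_T(u)\ge 2$, let $T_u$ be the tree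 just before the (unique) expansion at $u$. The rank $r:V(G)\to\mathbb{Z}$ is defined by $r(a)=1$ and, for each edge $uv$ of $T$ with $u=p(v)$: - $r(v)=r(u)$ if $u\in W_2(T_u)$; - $r(v)=1+\max_{w\in V(T_u)} r(w)$ otherwise. *)

From mathcomp Require Import all_boot.
Set Implicit Arguments. Unset Strict Implicit. Unset Printing Implicit Defensive.

Section TreeAlgo.
Variables (T : finType) (e : rel T).

Definition outN (S : {set T}) (u : T) : {set T} := [set v | e u v & v \notin S].

Definition expand (S : {set T}) (u : T) : {set T} := S :|: outN S u.

Definition W2 (S : {set T}) : {set T} := [set u in S | 2 <= #|outN S u|].
Definition W1 (S : {set T}) : {set T} :=
  [set u in S | [exists v, (outN S u == [set v]) && (2 <= #|outN (v |: S) v|)]].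
Definition W0 (S : {set T}) : {set T} :=
  [set u in S | [exists v, (outN S u == [set v]) && (#|outN (v |: S) v| <= 1)]].

Variable a : T.

(* An execution is recorded by the sequence us of vertices at which the tree
   is expanded.  state us i = vertex set of the tree before the i-th step. *)
Definition state (us : seq T) (i : nat) : {set T} :=
  foldl expand [set a] (take i us).

(* the step index at which v joined the tree (0 for a) *)
Definition jointime (us : seq T) (v : T) : nat :=
  find (fun j => v \in state us j) (iota 0 (size us).+1).

Definition valid_step (us : seq T) (i : nat) : Prop :=
  let S := state us i in
  let u := nth a us i in
  S != setT /\
  (W2 S != set0 -> u \in W2 S) /\
  (W2 S = set0 -> W1 S != set0 -> u \in W1 S) /\
  (W2 S = set0 -> W1 S = set0 ->
     u \in W0 S /\ (forall w, w \in W0 S -> jointime us w <= jointime us u)).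

Definition execution (us : seq T) : Prop :=
  (forall i, i < size us -> valid_step us i) /\ state us (size us) = setT.

Definition is_rank (us : seq T) (r : T -> nat) : Prop :=
  r a = 1 /\
  forall i, i < size us -> forall v, v \in outN (state us i) (nth a us i) ->
    r v = (if nth a us i \in W2 (state us i) then r (nth a us i)
           else (\max_(w in state us i) r w).+1).

End TreeAlgo.

From mathcomp Require Import all_boot.
Set Implicit Arguments. Unset Strict Implicit.

(* Only the priority of W2 in the algorithm matters.  Whenever W2 is nonempty the
   expanded vertex lies in W2, so by induction along the execution every
   vertex of W2 has maximal rank in the current tree; likewise a vertex that
   joins the tree has maximal rank in the tree right after it joined.  Hence
   if r u < r v, then v joins strictly after u.  If u had two neighbours
   v1, v2 of larger rank, look at the step at which the first of them, v1,
   joins: u is in the tree and v1, v2 are outside, so u is in W2, the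
   expanded vertex x is in W2 too, and r v1 = r x <= r u. *)

Section Neighbourhoods.
Variables (T : finType) (e : rel T).

Lemma outNS (A B : {set T}) u : A \subset B -> outN e B u \subset outN e A u.
Proof.
move=> AB; apply/subsetP => v; rewrite !inE => /andP[-> vB].
by apply: contra vB; apply: (subsetP AB).
Qed.

Lemma outN_adj (A : {set T}) u w v : v \in outN e A w -> e u v -> v \in outN e A u.
Proof. by rewrite !inE => /andP[_ ->] ->. Qed.

Lemma W2_mem (A : {set T}) y : y \in W2 e A -> y \in A.
Proof. by rewrite inE => /andP[]. Qed.

Lemma mem_W2S (A B : {set T}) y :
  A \subset B -> y \in A -> y \in W2 e B -> y \in W2 e A.
Proof.
rewrite !inE => AB -> /andP[_ cardB].
exact: leq_trans cardB (subset_leq_card (outNS y AB)).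
Qed.

Lemma mem_W2_outN2 (A : {set T}) u v w : u \in A -> v != w ->
  v \in outN e A u -> w \in outN e A u -> u \in W2 e A.
Proof.
move=> uA vw vout wout; rewrite inE uA /=.
have sub : [set v; w] \subset outN e A u.
  by apply/subsetP => z; rewrite in_set2 => /orP[] /eqP->.
by move: (subset_leq_card sub); rewrite cards2 vw.
Qed.

End Neighbourhoods.

Section Execution.
Variables (T : finType) (e : rel T) (a : T) (us : seq T) (r : T -> nat).
Local Notation S i := (state e a us i).
Local Notation x i := (nth a us i).

Lemma state0 : S 0 = [set a].
Proof. by rewrite /state take0. Qed.

Lemma stateS i : S i.+1 = if i < size us then expand e (S i) (x i) else S i.
Proof.
rewrite /state; case: ltnP => i_us.
- by rewrite (take_nth a i_us) foldl_rcons.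
- by rewrite !take_oversize // (leq_trans i_us).
Qed.

Lemma mem_stateS i v : i < size us -> v \in outN e (S i) (x i) -> v \in S i.+1.
Proof. by move=> i_us vout; rewrite stateS i_us in_setU vout orbT. Qed.

Lemma sub_state i k : i <= k -> S i \subset S k.
Proof.
elim: k => [|k IHk]; first by rewrite leqn0 => /eqP->.
rewrite leq_eqVlt => /orP[/eqP->//|/IHk ik]; apply: subset_trans ik _.
by rewrite stateS; case: ifP => // _; apply: subsetUl.
Qed.

Lemma mem_state_root i : a \in S i.
Proof. by apply: (subsetP (sub_state (leq0n i))); rewrite state0 set11. Qed.

Lemma outN_state i k u v :
  i <= k -> v \in outN e (S k) u -> v \in outN e (S i) u.
Proof. by move=> ik /(subsetP (outNS e u (sub_state ik))). Qed.

Hypothesis exec : execution e a us.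
Hypothesis hr : is_rank e a us r.

Lemma W2_expanded i : i < size us -> W2 e (S i) != set0 -> x i \in W2 e (S i).
Proof. by move=> i_us; have [_ [W2x _]] := (proj1 exec) i i_us. Qed.

Lemma rank_outN i v : i < size us -> v \in outN e (S i) (x i) ->
  r v = (if x i \in W2 e (S i) then r (x i) else (\max_(w in S i) r w).+1).
Proof. by case: hr => _ rank_step /rank_step; apply. Qed.

Definition W2_rank_max i := forall y w, y \in W2 e (S i) -> w \in S i -> r w <= r y.

Lemma rank_joined_max i v w : i < size us -> W2_rank_max i ->
  v \in outN e (S i) (x i) -> w \in S i.+1 -> r w <= r v.
Proof.
move=> i_us maxW2 vout; rewrite stateS i_us in_setU => /orP[wS|wout].
- rewrite (rank_outN i_us vout); case: ifP => [xW2|_]; first exact: maxW2.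
  exact/ltnW/leq_bigmax_cond.
- by rewrite (rank_outN i_us vout) (rank_outN i_us wout).
Qed.

Lemma W2_rank_max_state i : i <= size us -> W2_rank_max i.
Proof.
elim: i => [|i IHi] i_us y w.
  by rewrite state0 !inE => /andP[/eqP-> _] /eqP->.
have {}IHi := IHi (ltnW i_us).
case: (boolP (y \in S i)) => [yS|yS] yW2; last first.
  apply: rank_joined_max => //; move: yW2 yS.
  by rewrite inE stateS i_us in_setU => /andP[/orP[->|]].
have yW2i : y \in W2 e (S i) by apply: mem_W2S yW2; rewrite // stateS i_us subsetUl.
have xW2 : x i \in W2 e (S i) by apply: W2_expanded => //; apply/set0Pn; exists y.
rewrite stateS i_us in_setU => /orP[wS|wout]; first exact: IHi.
by rewrite (rank_outN i_us wout) xW2; apply: IHi yW2i (W2_mem xW2).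
Qed.

Lemma join_step v : v != a -> exists2 i, i < size us & v \in outN e (S i) (x i).
Proof.
move=> va.
have in_final : exists k, v \in S k by exists (size us); rewrite (proj2 exec) inE.
have [k vk kmin] := ex_minnP in_final.
case: k vk kmin => [|i] vk kmin; first by rewrite state0 inE (negbTE va) in vk.
have vS : v \notin S i by apply/negP => /kmin; rewrite ltnn.
move: vk; rewrite stateS; case: ifP => [i_us|_]; last by rewrite (negbTE vS).
by rewrite in_setU (negbTE vS) => vout; exists i.
Qed.

Lemma rank_max_on_join u : exists2 k, u \in S k & forall w, w \in S k -> r w <= r u.
Proof.
have [->|/join_step[j j_us uout]] := eqVneq u a.
  by exists 0 => [|w]; rewrite state0 ?set11 // inE => /eqP->.
exists j.+1; first exact: mem_stateS j_us uout.
by move=> w; apply: rank_joined_max j_us (W2_rank_max_state (ltnW j_us)) uout.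
Qed.

Lemma rank_lt_joins_later u w : r u < r w ->
  exists2 i, i < size us & w \in outN e (S i) (x i) /\ u \in S i.
Proof.
move=> ruw; have [k uk rank_le] := rank_max_on_join u.
have wk : w \notin S k by apply: contraTN ruw => /rank_le; rewrite leqNgt.
have wa : w != a by apply: contraNneq wk => ->; apply: mem_state_root.
have [i i_us wout] := join_step wa; exists i => //; split => //.
have ki : k <= i.
  rewrite leqNgt; apply: contra wk => ik.
  exact: (subsetP (sub_state ik)) _ (mem_stateS i_us wout).
exact: (subsetP (sub_state ki)) _ uk.
Qed.

Lemma rank_joined_le_W2 i u v : i < size us -> u \in W2 e (S i) ->
  v \in outN e (S i) (x i) -> r v <= r u.
Proof.
move=> i_us uW2 vout.
have xW2 : x i \in W2 e (S i) by apply: W2_expanded => //; apply/set0Pn; exists u.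
rewrite (rank_outN i_us vout) xW2.
exact: (W2_rank_max_state (ltnW i_us)) uW2 (W2_mem xW2).
Qed.

End Execution.

Theorem lemma2 (T : finType) (e : rel T) (a : T)
  (e_sym : symmetric e) (e_irr : irreflexive e)
  (e_conn : forall x y : T, connect e x y)
  (deg_a : 2 <= #|[set v | e a v]|)
  (us : seq T) (exec : execution e a us)
  (r : T -> nat) (hr : is_rank e a us r) :
  forall u v1 v2 : T, e u v1 -> e u v2 -> r u < r v1 -> r u < r v2 -> v1 = v2.
Proof.
move=> u v1 v2 uv1 uv2 lt1 lt2; apply/eqP/negPn/negP => v12.
have [i1 i1_us [out1 in1]] := rank_lt_joins_later exec hr lt1.
have [i2 i2_us [out2 in2]] := rank_lt_joins_later exec hr lt2.
wlog le12 : v1 v2 i1 i2 uv1 uv2 lt1 lt2 v12 i1_us out1 in1 i2_us out2 in2 / i1 <= i2.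
  move=> gen; case: (leqP i1 i2) => [|/ltnW] le; first exact: (gen v1 v2 i1 i2).
  by apply: (gen v2 v1 i2 i1); rewrite // eq_sym.
have uW2 : u \in W2 e (state e a us i1).
  apply: (mem_W2_outN2 in1 v12 (outN_adj out1 uv1)).
  exact: outN_state le12 (outN_adj out2 uv2).
by have := rank_joined_le_W2 exec hr i1_us uW2 out1; rewrite leqNgt lt1.
Qed.
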